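(* Consider an implication of canonical form $(\ast)$ and an environment $\eta$, and let $n\ge\max\{2,M_1,\dots,M_M\}$. If the implication is $n$-ary $\eta$-valid, then the Parametricity Condition holds for it and $\eta$.
   Context: $\mathsf{Heap}$: finite partial functions $\mathsf{PosInt}\to\mathsf{Int}$; $g\sqsubseteq h$ means $h$ extends $g$; $h\cdot g$ union of disjoint heaps; componentwise on $\mathsf{Heap}^n$. $\mathsf{IRel}_n$: upward closed subsets of $\mathsf{Heap}^n$; $p*q=\{\mathbf f\cdot\mathbf g\mid\mathbf f\in p,\mathbf g\in q,\text{componentwise disjoint}\}$; $\Delta_n(X)=\{(h_1,\dots,h_n)\mid\exists f\in X.\ \forall k.\ f\sqsubseteq h_k\}$. Assertions: built from primitive assertions $P$, assertion variables, $\mathsf{true},\mathsf{false},\wedge,\vee,*$, quantifiers over integer variables. $n$-ary meaning under $\eta$ and $\rho:\mathsf{AVar}\to\mathsf{IRel}_n$: $[\![P]\!]^n=\Delta_n([\![P]\!]^{\mathrm{prim}}_\eta)$, $[\![a]\!]^n=\rho(a)$, connectives by $\mathsf{Heap}^n,\emptyset,\cap,\cup,*$, quantifiers by unions/intersections. $n$-ary $\eta$-validity of $\varphi\Rightarrow\psi$: $[\![\varphi]\!]^n_{\eta,\rho}\subseteq[\![\psi]\!]^n_{\eta,\rho}$ for all $\rho:\mathsf{AVar}\to\mathsf{IRel}_n$. Canonical form $(\ast)$: $\bigwedge_{i=1}^M\varphi_i*a_{i,1}*\cdots*a_{i,M_i}\Rightarrow\bigvee_{j=1}^N\psi_j*b_{j,1}*\cdots*b_{j,N_j}$,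 $M\ge1$, $N\ge0$, $\varphi_i,\psi_j$ free of assertion variables, every $b_{j,k}$ among the $a_{i,k}$. $V=\{a_{i,k}\}$; $\Pi(i)(c)=|\{k\mid a_{i,k}=c\}|$, $\Omega(j)(c)=|\{k\mid b_{j,k}=c\}|$; $\Pi(i)\ge\Omega(j)$ iff $\Pi(i)(c)\ge\Omega(j)(c)$ for all $c\in V$. Disjunct $j$ is empty if $N_j=0$. Parametricity Condition: for all $h,h_1,\dots,h_M\in\mathsf{Heap}$ with $h_i\sqsubseteq h$ and $h_i\in[\![\varphi_i]\!]^1_\eta$ for all $i$, either (1) there are $i,j$ with $h_i\in[\![\psi_j]\!]^1_\eta$ and $\Pi(i)\ge\Omega(j)$, or (2) there is an empty disjunct $j$ with $h\in[\![\psi_j]\!]^1_\eta$. *)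

From Stdlib Require Import ZArith List PeanoNat.
Import ListNotations.
Set Implicit Arguments.

Definition Heap : Type :=
  { f : positive -> option Z | exists N : positive, forall p, (N < p)%positive -> f p = None }.

Definition hval (h : Heap) : positive -> option Z := proj1_sig h.

Definition hext (g h : Heap) : Prop :=
  forall p v, hval g p = Some v -> hval h p = Some v.

Definition heap_union (f g h : Heap) : Prop :=
  (forall p, hval f p = None \/ hval g p = None) /\
  (forall p, hval h p = match hval f p with Some v => Some v | None => hval g p end).

Definition Tup (n : nat) : Type := {k : nat | k < n} -> Heap.

Definition upclosed (n : nat) (p : Tup n -> Prop) : Prop :=
  forall hs gs : Tup n, p hs -> (forall k, hext (hs k) (gs k)) -> p gs.

Definition Delta (n : nat) (X : Heap -> Prop) : Tup n -> Prop :=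
  fun hs => exists f, X f /\ forall k, hext f (hs k).

(** Assertions; integer variables and assertion variables are nats. *)
Inductive assn (Prim : Type) : Type :=
| APrim : Prim -> assn Prim
| AVar : nat -> assn Prim
| ATrue : assn Prim
| AFalse : assn Prim
| AAnd : assn Prim -> assn Prim -> assn Prim
| AOr : assn Prim -> assn Prim -> assn Prim
| AStar : assn Prim -> assn Prim -> assn Prim
| AEx : nat -> assn Prim -> assn Prim
| AAll : nat -> assn Prim -> assn Prim.

Arguments ATrue {Prim}.
Arguments AFalse {Prim}.

Definition upd (eta : nat -> Z) (x : nat) (v : Z) : nat -> Z :=
  fun y => if Nat.eqb y x then v else eta y.

Fixpoint varfree (Prim : Type) (phi : assn Prim) : Prop :=
  match phi with
  | APrim _ | ATrue | AFalse => True
  | AVar _ _ => False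
  | AAnd a b | AOr a b | AStar a b => varfree a /\ varfree b
  | AEx _ a | AAll _ a => varfree a
  end.

(** n-ary meaning [[phi]]^n_{eta,rho}; primSem gives [[P]]^prim_eta. *)
Fixpoint sem (Prim : Type) (primSem : Prim -> (nat -> Z) -> Heap -> Prop) (n : nat)
    (eta : nat -> Z) (rho : nat -> Tup n -> Prop) (phi : assn Prim) : Tup n -> Prop :=
  match phi with
  | APrim P => @Delta n (primSem P eta)
  | AVar _ a => rho a
  | ATrue => fun _ => True
  | AFalse => fun _ => False
  | AAnd a b => fun hs => @sem Prim primSem n eta rho a hs /\ @sem Prim primSem n eta rho b hs
  | AOr a b => fun hs => @sem Prim primSem n eta rho a hs \/ @sem Prim primSem n eta rho b hs
  | AStar a b => fun hs => exists fs gs : Tup n,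
      @sem Prim primSem n eta rho a fs /\ @sem Prim primSem n eta rho b gs /\
      forall k, heap_union (fs k) (gs k) (hs k)
  | AEx x a => fun hs => exists v : Z, @sem Prim primSem n (upd eta x v) rho a hs
  | AAll x a => fun hs => forall v : Z, @sem Prim primSem n (upd eta x v) rho a hs
  end.

Definition valid_n (Prim : Type) (primSem : Prim -> (nat -> Z) -> Heap -> Prop) (n : nat)
    (eta : nat -> Z) (phi psi : assn Prim) : Prop :=
  forall rho : nat -> Tup n -> Prop, (forall a, @upclosed n (rho a)) ->
    forall hs, @sem Prim primSem n eta rho phi hs -> @sem Prim primSem n eta rho psi hs.

(** unary meaning [[phi]]^1_eta of a variable-free assertion (rho irrelevant, taken empty) *)
Definition sem1 (Prim : Type) (primSem : Prim -> (nat -> Z) -> Heap -> Prop)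
    (eta : nat -> Z) (phi : assn Prim) (h : Heap) : Prop :=
  @sem Prim primSem 1 eta (fun _ _ => False) phi (fun _ => h).

Definition star_vars (Prim : Type) (phi : assn Prim) (as_ : list nat) : assn Prim :=
  fold_left (fun acc a => AStar acc (AVar Prim a)) as_ phi.

Fixpoint big_and (Prim : Type) (l : list (assn Prim)) : assn Prim :=
  match l with
  | [] => ATrue
  | [x] => x
  | x :: xs => AAnd x (big_and xs)
  end.

Fixpoint big_or (Prim : Type) (l : list (assn Prim)) : assn Prim :=
  match l with
  | [] => AFalse
  | [x] => x
  | x :: xs => AOr x (big_or xs)
  end.

(** The implication of canonical form built from
    lhs = [(phi_1, [a_11..a_1M1]); ...; (phi_M, ...)] and
    rhs = [(psi_1, [b_11..b_1N1]); ...; (psi_N, ...)]. *)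
Definition can_lhs (Prim : Type) (lhs : list (assn Prim * list nat)) : assn Prim :=
  big_and (map (fun p => star_vars (fst p) (snd p)) lhs).
Definition can_rhs (Prim : Type) (rhs : list (assn Prim * list nat)) : assn Prim :=
  big_or (map (fun p => star_vars (fst p) (snd p)) rhs).

Definition canonical_form (Prim : Type) (lhs rhs : list (assn Prim * list nat)) : Prop :=
  1 <= length lhs /\
  (forall p, In p lhs -> varfree (fst p)) /\
  (forall p, In p rhs -> varfree (fst p)) /\
  (forall p b, In p rhs -> In b (snd p) -> exists q, In q lhs /\ In b (snd q)).

Definition Vset (Prim : Type) (lhs : list (assn Prim * list nat)) : list nat :=
  concat (map snd lhs).

(** Pi(i) >= Omega(j), with multiplicities counted by count_occ *)
Definition mult_ge (V ai bj : list nat) : Prop :=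
  forall c, In c V -> count_occ Nat.eq_dec bj c <= count_occ Nat.eq_dec ai c.

Definition parametricity (Prim : Type) (primSem : Prim -> (nat -> Z) -> Heap -> Prop)
    (eta : nat -> Z) (lhs rhs : list (assn Prim * list nat)) : Prop :=
  let d := (@ATrue Prim, @nil nat) in
  forall (h : Heap) (hi : nat -> Heap),
    (forall i, i < length lhs ->
        hext (hi i) h /\ sem1 primSem eta (fst (nth i lhs d)) (hi i)) ->
    (exists i j, i < length lhs /\ j < length rhs /\
        sem1 primSem eta (fst (nth j rhs d)) (hi i) /\
        mult_ge (Vset lhs) (snd (nth i lhs d)) (snd (nth j rhs d)))
    \/
    (exists j, j < length rhs /\ snd (nth j rhs d) = [] /\
        sem1 primSem eta (fst (nth j rhs d)) h).

From Stdlib Require Import ZArith List PeanoNat Lia.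
From Stdlib Require Import ClassicalEpsilon ProofIrrelevance FunctionalExtensionality.
Import ListNotations.

(* Given h and heaps hi i below h satisfying the pure parts phi_i, we build one environment rho
   and one n-tuple of heaps (the state) satisfying the left-hand side; by validity the state
   satisfies some disjunct  psi_j * b_1 * ... * b_l,  from which the condition is read off.
   Every component of the state is h; component 0 additionally holds "token" cells above the
   domain of h, one for each pair of variable occurrences (slots) that are not two distinct
   slots of one conjunct.  The piece of slot (i, m) is h minus hi i in component m together
   with the tokens of (i, m) in component 0, and rho c is the upward closure of the pieces of
   the slots labelled c.  In the disjunct, disjointness forces the variables onto distinct
   slots of a single conjunct i, so Pi(i) >= Omega(j); the pure part psi_j is disjoint from
   the piece of such a slot and hence lives in hi i.  For an empty disjunct psi_j lives in h,
   which is all that component 1 contains. *)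

Definition dec (P : Prop) : {P} + {~ P} := excluded_middle_informative P.

Definition restr (g : Heap) (P : positive -> Prop) : Heap.
Proof.
  refine (exist _ (fun p => if dec (P p) then hval g p else None) _).
  destruct (proj2_sig g) as [N HN]. exists N. intros p Hp.
  destruct (dec (P p)); [apply HN; exact Hp | reflexivity].
Defined.

Lemma restr_val g P p : hval (restr g P) p = if dec (P p) then hval g p else None.
Proof. reflexivity. Qed.

Lemma restr_in g P p : P p -> hval (restr g P) p = hval g p.
Proof. intro H. rewrite restr_val. destruct (dec (P p)); tauto. Qed.

Lemma heap_ext (g g' : Heap) : (forall p, hval g p = hval g' p) -> g = g'.
Proof.
  destruct g as [x Hx], g' as [y Hy]; unfold hval; simpl; intro H.
  assert (x = y) by (apply functional_extensionality; auto). subst.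
  f_equal; apply proof_irrelevance.
Qed.

Lemma restr_ext g P Q : (forall p, P p <-> Q p) -> restr g P = restr g Q.
Proof.
  intro H. apply heap_ext. intro p. rewrite !restr_val.
  destruct (dec (P p)), (dec (Q p)); firstorder.
Qed.

Lemma restr_union g P Q R :
  (forall p, ~ (P p /\ Q p)) -> (forall p, R p <-> P p \/ Q p) ->
  heap_union (restr g P) (restr g Q) (restr g R).
Proof.
  intros HPQ HR; split; intro p; rewrite !restr_val; specialize (HPQ p); specialize (HR p).
  - destruct (dec (P p)), (dec (Q p)); tauto.
  - destruct (hval g p), (dec (P p)), (dec (Q p)), (dec (R p)); tauto.
Qed.

Lemma restr_split f P : heap_union (restr f P) (restr f (fun p => ~ P p)) f.
Proof.
  split; intro p; rewrite !restr_val; destruct (dec (P p)), (dec (~ P p));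
    try tauto; destruct (hval f p); auto.
Qed.

Lemma heap_union_ext_l {f g h : Heap} : heap_union f g h -> hext f h.
Proof. intros [_ E] p v Hv. rewrite E, Hv. reflexivity. Qed.

Lemma heap_union_ext_r {f g h : Heap} : heap_union f g h -> hext g h.
Proof.
  intros [D E] p v Hv. rewrite E. destruct (D p) as [Hf | Hg]; [rewrite Hf | congruence]; auto.
Qed.

Lemma heap_union_disj f g h p v : heap_union f g h -> hval f p = Some v -> hval g p = None.
Proof. intros [D _] Hv. destruct (D p); congruence. Qed.

Definition ix0 : {k : nat | k < 1} := exist _ 0 Nat.lt_0_1.

Lemma tup1_const (T : Tup 1) : T = fun _ => T ix0.
Proof.
  apply functional_extensionality. intros [k Hk]. assert (k = 0) by lia. subst k.
  unfold ix0. f_equal. f_equal. apply proof_irrelevance.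
Qed.

Definition covers_common {n : nat} (G : Tup n) (f : Heap) : Prop :=
  forall p v, (forall k, hval (G k) p = Some v) -> hval f p = Some v.

Section VariableFree.
Variables (Prim : Type) (primSem : Prim -> (nat -> Z) -> Heap -> Prop) (n : nat).

Lemma varfree_sem_lift (phi : assn Prim) : forall eta (rho : nat -> Tup n -> Prop)
    (h : Heap) (F : Tup n),
  varfree phi -> sem1 primSem eta phi h -> (forall k, hext h (F k)) ->
  sem primSem eta rho phi F.
Proof.
  unfold sem1.
  induction phi; intros eta rho h F Hvf Hs Hext; simpl in *; try tauto.
  - destruct Hs as [f [Xf Hf]]. exists f; split; auto.
    intros k q v H. apply Hext, (Hf ix0), H.
  - destruct Hvf, Hs; split; eauto.
  - destruct Hvf; destruct Hs; [left | right]; eauto.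
  - destruct Hvf as [V1 V2]. destruct Hs as [fs [gs [Ha [Hb Hu]]]].
    rewrite (tup1_const fs) in Ha. rewrite (tup1_const gs) in Hb.
    destruct (Hu ix0) as [Hd Hv].
    exists (fun _ => fs ix0), (fun k => restr (F k) (fun p => hval (fs ix0) p = None)).
    split; [|split].
    + eapply IHphi1; eauto. intros k p v H; exact H.
    + eapply IHphi2; eauto. intros k p v H.
      assert (Hfs : hval (fs ix0) p = None) by (destruct (Hd p); congruence).
      rewrite restr_in by exact Hfs.
      apply Hext. eapply heap_union_ext_r; eauto.
    + intro k. split; intro p.
      * rewrite restr_val. destruct (dec _); auto.
      * rewrite restr_val. destruct (hval (fs ix0) p) eqn:E.
        -- apply Hext. eapply heap_union_ext_l; eauto.
        -- destruct (dec _); congruence.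
  - destruct Hs as [v Hv]. exists v. eauto.
  - intro v. eauto.
Qed.

(* For n = 0 every cell would be common, hence the positivity of n. *)
Lemma varfree_sem_common (Hn : 0 < n) (phi : assn Prim) :
  forall eta (rho : nat -> Tup n -> Prop) (G : Tup n) (f : Heap),
  varfree phi -> sem primSem eta rho phi G -> covers_common G f -> sem1 primSem eta phi f.
Proof.
  unfold sem1, covers_common.
  induction phi; intros eta rho G f Hvf Hs Hf; simpl in *; try tauto.
  - destruct Hs as [g [Xg Hg]]. exists g; split; auto.
    intros k q v H. apply Hf. intro k'. apply Hg, H.
  - destruct Hvf, Hs; split; eauto.
  - destruct Hvf; destruct Hs; [left | right]; eauto.
  - destruct Hvf as [V1 V2]. destruct Hs as [A [B [HA [HB HU]]]].
    set (P := fun p => exists v, forall k, hval (A k) p = Some v).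
    exists (fun _ => restr f P), (fun _ => restr f (fun p => ~ P p)).
    split; [|split].
    + eapply IHphi1; eauto. intros p v H. rewrite restr_in by (exists v; exact H).
      apply Hf. intro k. eapply heap_union_ext_l; eauto.
    + eapply IHphi2; eauto. intros p v H.
      assert (HAn : forall k, hval (A k) p = None).
      { intro k. destruct (HU k) as [Hd _]. destruct (Hd p); auto. congruence. }
      rewrite restr_in.
      * apply Hf. intro k. destruct (HU k) as [_ Hg]. rewrite Hg, HAn. auto.
      * intros [v' Hv']. specialize (Hv' (exist _ 0 Hn)). congruence.
    + intro. apply restr_split.
  - destruct Hs as [v Hv]. exists v. eauto.
  - intro v. eauto.
Qed.

End VariableFree.

Section Stars.
Variables (Prim : Type) (primSem : Prim -> (nat -> Z) -> Heap -> Prop) (n : nat)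
  (eta : nat -> Z) (rho : nat -> Tup n -> Prop).

(* Stars are added on the right, so induction runs over the list from its end. *)
Lemma star_vars_app (phi : assn Prim) l a :
  star_vars phi (l ++ [a]) = AStar (star_vars phi l) (AVar Prim a).
Proof. unfold star_vars. rewrite fold_left_app. reflexivity. Qed.

Lemma star_vars_intro (Hb : Heap) (phi : assn Prim)
    (PF : {k : nat | k < n} -> positive -> Prop)
    (PT : nat -> {k : nat | k < n} -> positive -> Prop) :
  forall l (R : {k : nat | k < n} -> positive -> Prop),
  (forall idx, idx < length l -> rho (nth idx l 0) (fun k => restr Hb (PT idx k))) ->
  sem primSem eta rho phi (fun k => restr Hb (PF k)) ->
  (forall idx k p, idx < length l -> ~ (PF k p /\ PT idx k p)) ->
  (forall idx idx' k p, idx < length l -> idx' < length l ->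
      PT idx k p -> PT idx' k p -> idx = idx') ->
  (forall k p, R k p <-> PF k p \/ exists idx, idx < length l /\ PT idx k p) ->
  sem primSem eta rho (star_vars phi l) (fun k => restr Hb (R k)).
Proof.
  intro l; induction l as [|a l IH] using rev_ind; intros R Hrho HF Hd1 Hd2 HR.
  - replace (fun k => restr Hb (R k)) with (fun k => restr Hb (PF k)); [exact HF |].
    apply functional_extensionality; intro k. apply restr_ext; intro p.
    rewrite HR. simpl. split; [auto | intros [H | [idx [Hi _]]]; [auto | lia]].
  - rewrite star_vars_app. simpl. rewrite length_app in *. simpl in *.
    exists (fun k => restr Hb (fun p => PF k p \/ exists idx, idx < length l /\ PT idx k p)),
           (fun k => restr Hb (PT (length l) k)).
    split; [|split].
    + apply IH; auto.
      * intros idx Hi. rewrite <- (app_nth1 l [a]) by auto. apply Hrho. lia.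
      * intros; apply Hd1; lia.
      * intros; eapply Hd2; eauto; lia.
      * intros; tauto.
    + pose proof (Hrho (length l) ltac:(lia)) as H. rewrite nth_middle in H. exact H.
    + intro k. apply restr_union.
      * intros p [[H1 | [idx [Hi H1]]] H2].
        -- eapply Hd1; [| split; eauto]. lia.
        -- assert (idx = length l) by (eapply Hd2; eauto; lia). lia.
      * intro p. rewrite HR. split.
        -- intros [H | [idx [Hi H]]]; auto.
           destruct (Nat.eq_dec idx (length l)); [subst; auto|].
           left; right; exists idx; split; auto; lia.
        -- intros [[H | [idx [Hi H]]] | H]; auto.
           ++ right; exists idx; split; auto; lia.
           ++ right; exists (length l); split; auto; lia.
Qed.

Lemma star_vars_elim (phi : assn Prim) : forall l (hs : Tup n),
  sem primSem eta rho (star_vars phi l) hs ->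
  exists (G : Tup n) (Bs : nat -> Tup n),
    sem primSem eta rho phi G /\ (forall k, hext (G k) (hs k)) /\
    (forall idx, idx < length l -> rho (nth idx l 0) (Bs idx) /\
        (forall k, hext (Bs idx k) (hs k)) /\
        (forall k p, hval (G k) p = None \/ hval (Bs idx k) p = None)) /\
    (forall idx idx', idx < length l -> idx' < length l -> idx <> idx' ->
        forall k p, hval (Bs idx k) p = None \/ hval (Bs idx' k) p = None).
Proof.
  intro l; induction l as [|a l IH] using rev_ind; intros hs H.
  - exists hs, (fun _ => hs). simpl. split; auto. split; [intros k p v Hv; auto|].
    split; intros; lia.
  - rewrite star_vars_app in H. simpl in H. destruct H as [fs [gs [H1 [H2 Hu]]]].
    destruct (IH fs H1) as [G [Bs [HG [HGe [HBs HBd]]]]].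
    assert (Dfg : forall k p v, hval (fs k) p = Some v -> hval (gs k) p = None)
      by (intros k p v; apply heap_union_disj with (h := hs k); auto).
    exists G, (fun idx => if Nat.eqb idx (length l) then gs else Bs idx).
    rewrite length_app; simpl.
    split; auto. split; [intros k p v Hv; apply (heap_union_ext_l (Hu k)), HGe, Hv|]. split.
    + intros idx Hi. destruct (Nat.eqb_spec idx (length l)).
      * subst. rewrite nth_middle. split; auto. split; [intro k; apply (heap_union_ext_r (Hu k))|].
        intros k p. destruct (hval (G k) p) eqn:E; auto. right. eapply Dfg, HGe, E.
      * destruct (HBs idx ltac:(lia)) as [Hr [He Hd]].
        rewrite app_nth1 by lia. split; auto. split; auto.
        intros k p v Hv. apply (heap_union_ext_l (Hu k)), He, Hv.
    + intros idx idx' Hi Hi' Hne k p.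
      destruct (Nat.eqb_spec idx (length l)), (Nat.eqb_spec idx' (length l)).
      * lia.
      * destruct (hval (Bs idx' k) p) eqn:E; auto. left.
        destruct (HBs idx' ltac:(lia)) as [_ [He _]]. eapply Dfg, He, E.
      * destruct (hval (Bs idx k) p) eqn:E; auto. right.
        destruct (HBs idx ltac:(lia)) as [_ [He _]]. eapply Dfg, He, E.
      * apply HBd; auto; lia.
Qed.

Lemma big_and_intro : forall (l : list (assn Prim)) hs,
  (forall x, In x l -> sem primSem eta rho x hs) -> sem primSem eta rho (big_and l) hs.
Proof.
  intro l; induction l as [|a l IH]; intros hs H; simpl; auto.
  destruct l as [|b l]; [apply H; left; auto|].
  split; [apply H; left; auto|]. apply IH. intros x Hx; apply H; right; auto.
Qed.

Lemma big_or_elim : forall (l : list (assn Prim)) hs,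
  sem primSem eta rho (big_or l) hs -> exists x, In x l /\ sem primSem eta rho x hs.
Proof.
  intro l; induction l as [|a l IH]; intros hs H; simpl in *; [contradiction|].
  destruct l as [|b l]; [exists a; auto|].
  destruct H as [H | H]; [exists a; auto|].
  destruct (IH hs H) as [x [Hx Hs]]. exists x; auto.
Qed.

End Stars.

Definition positions_of (l : list nat) (c : nat) : list nat :=
  filter (fun x => Nat.eqb (nth x l 0) c) (seq 0 (length l)).

Lemma count_occ_positions l c : count_occ Nat.eq_dec l c = length (positions_of l c).
Proof.
  unfold positions_of. induction l as [|a l IH]; simpl; auto.
  rewrite IH, <- seq_shift, filter_map_swap.
  destruct (Nat.eq_dec a c); destruct (Nat.eqb_spec a c); try congruence;
    simpl; rewrite length_map; reflexivity.
Qed.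

Lemma count_occ_le_of_injection (l1 l2 : list nat) (f : nat -> nat) :
  (forall x, x < length l1 -> f x < length l2 /\ nth (f x) l2 0 = nth x l1 0) ->
  (forall x y, x < length l1 -> y < length l1 -> f x = f y -> x = y) ->
  forall c, count_occ Nat.eq_dec l1 c <= count_occ Nat.eq_dec l2 c.
Proof.
  intros Hf Hinj c. rewrite !count_occ_positions, <- (length_map f).
  assert (Hpos : forall l x, In x (positions_of l c) <-> x < length l /\ nth x l 0 = c).
  { intros l x. unfold positions_of. rewrite filter_In, in_seq, Nat.eqb_eq. lia. }
  apply NoDup_incl_length.
  - apply NoDup_map_NoDup_ForallPairs.
    + intros x y Hx Hy. apply Hpos in Hx, Hy. apply Hinj; tauto.
    + apply NoDup_filter, seq_NoDup.
  - intros y Hy. apply in_map_iff in Hy as [x [<- Hx]]. apply Hpos in Hx as [Hx Hc].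
    destruct (Hf x Hx) as [H1 H2]. apply Hpos. split; congruence.
Qed.

(* A slot (i, m) stands for the m-th variable occurrence of conjunct i.  Above
   the bound N of the given heap we place one token for each pair of slots that are not two
   different slots of the same conjunct; the pair is encoded in base K. *)
Definition enc (K a b c d : nat) : nat := a + K * (b + K * (c + K * d)).

Definition cell (N : positive) (K a b c d : nat) : positive :=
  Pos.of_succ_nat (Pos.to_nat N + enc K a b c d).

Lemma enc_inj K a b c d a' b' c' d' : a < K -> b < K -> c < K -> a' < K -> b' < K -> c' < K ->
  enc K a b c d = enc K a' b' c' d' -> a = a' /\ b = b' /\ c = c' /\ d = d'.
Proof.
  unfold enc; intros.
  destruct (Nat.div_mod_unique K (b + K * (c + K * d)) (b' + K * (c' + K * d')) a a')
    as [E1 E2]; [auto | auto | lia |].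
  destruct (Nat.div_mod_unique K (c + K * d) (c' + K * d') b b') as [E3 E4]; [auto | auto | lia |].
  destruct (Nat.div_mod_unique K d d' c c') as [E5 E6]; [auto | auto | lia |].
  auto.
Qed.

Lemma enc_le K a b c d : a < K -> b < K -> c < K -> d < K ->
  enc K a b c d <= K + K * (K + K * (K + K * K)).
Proof.
  unfold enc; intros.
  apply Nat.add_le_mono; [lia|]. apply Nat.mul_le_mono_l.
  apply Nat.add_le_mono; [lia|]. apply Nat.mul_le_mono_l.
  apply Nat.add_le_mono; [lia|]. apply Nat.mul_le_mono_l. lia.
Qed.

Lemma cell_gt N K a b c d : (N < cell N K a b c d)%positive.
Proof. unfold cell. pose proof (SuccNat2Pos.id_succ (Pos.to_nat N + enc K a b c d)). lia. Qed.

(* The slot pair ((a, b), (c, d)) carries a token. *)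
Definition admissible (K a b c d : nat) : Prop :=
  a < K /\ b < K /\ c < K /\ d < K /\ (a = c -> b = d).

Definition Tok (N : positive) (K : nat) (p : positive) : Prop :=
  exists a b c d, admissible K a b c d /\ p = cell N K a b c d.

Definition Owns (N : positive) (K : nat) (i m : nat) (p : positive) : Prop :=
  exists a b c d, admissible K a b c d /\ p = cell N K a b c d /\
    ((a = i /\ b = m) \/ (c = i /\ d = m)).

Lemma Owns_Tok N K i m p : Owns N K i m p -> Tok N K p.
Proof. intros (a & b & c & d & Ha & Hp & _). exists a, b, c, d; auto. Qed.

Lemma Tok_gt N K p : Tok N K p -> (N < p)%positive.
Proof. intros (a & b & c & d & _ & ->). apply cell_gt. Qed.

Lemma Owns_uniq N K i m m' p : Owns N K i m p -> Owns N K i m' p -> m = m'.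
Proof.
  intros (a & b & c & d & (Ha & Hb & Hc & Hd & Hac) & -> & H)
         (a' & b' & c' & d' & (Ha' & Hb' & Hc' & Hd' & _) & E & H').
  unfold cell in E. apply SuccNat2Pos.inj, Nat.add_cancel_l, enc_inj in E; auto.
  destruct E as (<- & <- & <- & <-).
  destruct H as [[] | []], H' as [[] | []]; subst; auto. symmetry; auto.
Qed.

Lemma Owns_pair N K i m i' m' : i < K -> m < K -> i' < K -> m' < K ->
  ~ (i = i' /\ m <> m') -> exists p, Owns N K i m p /\ Owns N K i' m' p.
Proof.
  intros Hi Hm Hi' Hm' Hne. exists (cell N K i m i' m').
  assert (Hadm : admissible K i m i' m') by (repeat split; auto; lia).
  split; exists i, m, i', m'; auto.
Qed.

Definition token_heap (h : Heap) (N : positive) (K : nat) : Heap.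
Proof.
  refine (exist _ (fun p => if dec (p <= N)%positive then hval h p
                            else if dec (Tok N K p) then Some 0%Z else None) _).
  set (B := Pos.to_nat N + (K + K * (K + K * (K + K * K)))).
  exists (Pos.of_succ_nat B). intros p Hp. pose proof (SuccNat2Pos.id_succ B).
  destruct (dec _) as [Hle|_]; [lia|].
  destruct (dec _) as [HT|_]; auto. exfalso.
  destruct HT as (a & b & c & d & (Ha & Hb & Hc & Hd & _) & ->). unfold cell in Hp.
  pose proof (enc_le K a b c d Ha Hb Hc Hd).
  pose proof (SuccNat2Pos.id_succ (Pos.to_nat N + enc K a b c d)). lia.
Defined.

Lemma token_heap_low h N K p : (p <= N)%positive -> hval (token_heap h N K) p = hval h p.
Proof. intro H. simpl. destruct (dec _); tauto. Qed.

Lemma token_heap_tok h N K p : Tok N K p -> hval (token_heap h N K) p = Some 0%Z.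
Proof.
  intro H. pose proof (Tok_gt _ _ _ H). simpl. destruct (dec _); [lia|].
  destruct (dec _); tauto.
Qed.

(* Given h, heaps hi i below h satisfying the pure parts of the conjuncts, and a
   bound N of the domain of h, we build an environment rho and a state whose conjunct i splits
   as a frame (hi i in the first M_i components) plus one piece per slot (i, m): the rest of h
   in component m, and the tokens of (i, m) in component 0.  Component 0 of the state is h
   together with all tokens, the other components are h. *)
Section Witness.
Variables (Prim : Type) (primSem : Prim -> (nat -> Z) -> Heap -> Prop) (eta : nat -> Z)
  (lhs : list (assn Prim * list nat)) (n : nat) (h : Heap) (hi : nat -> Heap) (N : positive).

Local Notation d := (@ATrue Prim, @nil nat).
Local Notation pure i := (fst (nth i lhs d)).
Local Notation vars i := (snd (nth i lhs d)).

Hypothesis two_le_n : 2 <= n.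
Hypothesis vars_le_n : forall p, In p lhs -> length (snd p) <= n.
Hypothesis h_bounded : forall p, (N < p)%positive -> hval h p = None.
Hypothesis hi_below : forall i, i < length lhs -> hext (hi i) h.

Lemma h_low p v : hval h p = Some v -> (p <= N)%positive.
Proof.
  intro Hv. destruct (dec (p <= N)%positive) as [| Hgt]; auto.
  rewrite h_bounded in Hv by lia. congruence.
Qed.

Lemma slot_bound i m : i < length lhs -> m < length (vars i) -> m < n.
Proof. intros Hi Hm. pose proof (vars_le_n _ (nth_In lhs d Hi)). lia. Qed.

(* All conjunct and slot indices are digits below the base. *)
Definition token_base : nat := length lhs + n + 1.

Definition big_heap : Heap := token_heap h N token_base.

Definition cells (P : {k : nat | k < n} -> positive -> Prop) : Tup n :=
  fun k => restr big_heap (P k).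

Definition state_cells (k : {k : nat | k < n}) (p : positive) : Prop :=
  (p <= N)%positive \/ proj1_sig k = 0.

Definition slot_cells (i m : nat) (k : {k : nat | k < n}) (p : positive) : Prop :=
  ((p <= N)%positive /\ proj1_sig k = m /\ hval (hi i) p = None) \/
  (proj1_sig k = 0 /\ Owns N token_base i m p).

Definition frame_cells (i : nat) (k : {k : nat | k < n}) (p : positive) : Prop :=
  ((p <= N)%positive /\ ~ (proj1_sig k < length (vars i) /\ hval (hi i) p = None)) \/
  (proj1_sig k = 0 /\ (N < p)%positive /\
     ~ exists m, m < length (vars i) /\ Owns N token_base i m p).

Definition slot_in (c : nat) (B : Tup n) (s : nat * nat) : Prop :=
  fst s < length lhs /\ snd s < length (vars (fst s)) /\ nth (snd s) (vars (fst s)) 0 = c /\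
  forall k, hext (cells (slot_cells (fst s) (snd s)) k) (B k).

Definition witness_rho (c : nat) (B : Tup n) : Prop := exists s, slot_in c B s.

Lemma witness_rho_upclosed c : upclosed (witness_rho c).
Proof.
  intros B B' [s (Hi & Hm & Hc & HB)] Hext. exists s; repeat split; auto.
  intros k p v Hv. apply Hext, HB, Hv.
Qed.

(* The frame of conjunct i contains hi i in every component, so it satisfies phi_i. *)
Lemma frame_sem i : i < length lhs -> varfree (pure i) -> sem1 primSem eta (pure i) (hi i) ->
  sem primSem eta witness_rho (pure i) (cells (frame_cells i)).
Proof.
  intros Hi Hvf Hs. apply varfree_sem_lift with (h := hi i); auto.
  intros k p v Hv. assert (Hh := hi_below i Hi p v Hv). assert (Hp := h_low p v Hh).
  unfold cells, big_heap. rewrite restr_in, token_heap_low; auto.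
  left; split; auto. intros [_ E]; congruence.
Qed.

Lemma frame_slot_disjoint i m k p :
  m < length (vars i) -> ~ (frame_cells i k p /\ slot_cells i m k p).
Proof.
  intros Hm [[[Hp Hnot] | (Hk & Hp & Hno)] [(Hp' & Hk' & Hh') | (Hk' & Ho)]].
  - apply Hnot; split; [lia | auto].
  - pose proof (Tok_gt _ _ _ (Owns_Tok _ _ _ _ _ Ho)). lia.
  - lia.
  - apply Hno; exists m; auto.
Qed.

Lemma slot_cells_disjoint i m m' k p : slot_cells i m k p -> slot_cells i m' k p -> m = m'.
Proof.
  intros [(Hp & Hk & _) | (Hk & Ho)] [(Hp' & Hk' & _) | (Hk' & Ho')].
  - lia.
  - pose proof (Tok_gt _ _ _ (Owns_Tok _ _ _ _ _ Ho')). lia.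
  - pose proof (Tok_gt _ _ _ (Owns_Tok _ _ _ _ _ Ho)). lia.
  - eapply Owns_uniq; eauto.
Qed.

Lemma state_cells_split i k p : state_cells k p <->
  frame_cells i k p \/ exists m, m < length (vars i) /\ slot_cells i m k p.
Proof.
  unfold state_cells, frame_cells, slot_cells. split.
  - intro Hk. destruct (dec (p <= N)%positive) as [Hle | Hgt].
    + destruct (dec (proj1_sig k < length (vars i) /\ hval (hi i) p = None))
        as [[Hk1 Hh1] | Hno]; [right; exists (proj1_sig k) | left; left]; auto.
    + destruct Hk as [Hk | Hk]; [lia |].
      destruct (dec (exists m, m < length (vars i) /\ Owns N token_base i m p))
        as [(m & Hm & Ho) | Hno]; [right; exists m; auto | left; right; repeat split; auto; lia].
  - intros [[[Hle _] | [Hk0 _]] | (m & _ & [[Hle _] | [Hk0 _]])]; auto.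
Qed.

Lemma conjunct_sem i : i < length lhs -> varfree (pure i) -> sem1 primSem eta (pure i) (hi i) ->
  sem primSem eta witness_rho (star_vars (pure i) (vars i)) (cells state_cells).
Proof.
  intros Hi Hvf Hs.
  apply star_vars_intro with (Hb := big_heap) (PF := frame_cells i) (PT := slot_cells i).
  - intros m Hm. exists (i, m); repeat split; auto. intros k p v H; exact H.
  - apply frame_sem; auto.
  - intros m k p Hm. apply frame_slot_disjoint; auto.
  - intros m m' k p _ _. apply slot_cells_disjoint.
  - intros k p. apply state_cells_split.
Qed.

Lemma witness_lhs :
  (forall p, In p lhs -> varfree (fst p)) ->
  (forall i, i < length lhs -> sem1 primSem eta (pure i) (hi i)) ->
  sem primSem eta witness_rho (can_lhs lhs) (cells state_cells).
Proof.
  intros Hvf Hs. apply big_and_intro. intros x Hx.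
  apply in_map_iff in Hx as [pr [<- Hpr]].
  destruct (In_nth _ _ d Hpr) as [i [Hi <-]].
  apply conjunct_sem; auto.
Qed.

(* The cells common to all components of a part of the state lie in h, since component 1
   of the state is h. *)
Lemma common_in_h (G : Tup n) :
  (forall k, hext (G k) (cells state_cells k)) -> covers_common G h.
Proof.
  intros HG p v Hall. assert (H1n : 1 < n) by lia.
  specialize (HG (exist _ 1 H1n) p v (Hall _)). unfold cells in HG. rewrite restr_val in HG.
  destruct (dec _) as [[Hp | Hp] | _]; [| discriminate | discriminate].
  unfold big_heap in HG; rewrite token_heap_low in HG; auto.
Qed.

Lemma slot_token i m p (H0n : 0 < n) : Owns N token_base i m p ->
  hval (cells (slot_cells i m) (exist _ 0 H0n)) p = Some 0%Z.
Proof.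
  intro Ho. unfold cells, big_heap. rewrite restr_in.
  - apply token_heap_tok. eapply Owns_Tok; eauto.
  - right; split; auto.
Qed.

(* Disjoint parts containing the pieces of two slots: the slots must be distinct slots of the
   same conjunct, since otherwise they share a token in component 0. *)
Lemma slots_of_disjoint_parts (B B' : Tup n) c c' s s' :
  slot_in c B s -> slot_in c' B' s' ->
  (forall k p, hval (B k) p = None \/ hval (B' k) p = None) ->
  fst s = fst s' /\ snd s <> snd s'.
Proof.
  destruct s as [i m], s' as [i' m']. intros (Hi & Hm & _ & HB) (Hi' & Hm' & _ & HB') Hdisj.
  simpl in *.
  destruct (dec (i = i' /\ m <> m')) as [| Hne]; auto. exfalso.
  pose proof (slot_bound i m Hi Hm). pose proof (slot_bound i' m' Hi' Hm').
  destruct (Owns_pair N token_base i m i' m' ltac:(unfold token_base; lia)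
              ltac:(unfold token_base; lia) ltac:(unfold token_base; lia)
              ltac:(unfold token_base; lia) Hne) as [p [Ho Ho']].
  assert (H0n : 0 < n) by lia.
  pose proof (HB _ _ _ (slot_token i m p H0n Ho)).
  pose proof (HB' _ _ _ (slot_token i' m' p H0n Ho')).
  destruct (Hdisj (exist _ 0 H0n) p); congruence.
Qed.

(* A part of the state disjoint from a part containing the piece of slot s = (i, m) has all
   its common cells in hi i: the piece holds the rest of h in component m. *)
Lemma common_in_conjunct (G B : Tup n) c s : slot_in c B s ->
  (forall k, hext (G k) (cells state_cells k)) ->
  (forall k p, hval (G k) p = None \/ hval (B k) p = None) ->
  covers_common G (hi (fst s)).
Proof.
  destruct s as [i m]. intros (Hi & Hm & _ & HB) HG Hdisj p v Hall. simpl in *.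
  assert (Hh : hval h p = Some v) by (apply (common_in_h G HG), Hall).
  destruct (hval (hi i) p) as [w|] eqn:E.
  - rewrite (hi_below i Hi p w E) in Hh. congruence.
  - set (km := exist (fun k => k < n) m (slot_bound i m Hi Hm)).
    assert (Hp : hval (B km) p = Some v).
    { apply HB. unfold cells, big_heap. rewrite restr_in, token_heap_low; auto.
      - eapply h_low; eauto.
      - left; repeat split; auto. eapply h_low; eauto. }
    destruct (Hdisj km p); congruence.
Qed.

Lemma witness_disjunct (psi : assn Prim) (bs : list nat) : varfree psi ->
  sem primSem eta witness_rho (star_vars psi bs) (cells state_cells) ->
  (bs = [] /\ sem1 primSem eta psi h) \/
  (exists i, i < length lhs /\ sem1 primSem eta psi (hi i) /\
     forall c, count_occ Nat.eq_dec bs c <= count_occ Nat.eq_dec (vars i) c).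
Proof.
  intros Hvf Hs. assert (H0n : 0 < n) by lia.
  apply star_vars_elim in Hs as (G & Bs & HG & HGe & HBs & HBd).
  destruct (Nat.eq_dec (length bs) 0) as [Hz | Hnz].
  { left. split; [apply length_zero_iff_nil; auto |].
    eapply (varfree_sem_common _ _ _ H0n); [exact Hvf | exact HG |].
    apply common_in_h, HGe. }
  right.
  assert (Hslot : exists g : nat -> nat * nat,
    forall idx, idx < length bs -> slot_in (nth idx bs 0) (Bs idx) (g idx)).
  { apply (choice (fun idx s => idx < length bs -> slot_in (nth idx bs 0) (Bs idx) s)).
    intro idx. destruct (dec (idx < length bs)) as [Hi | Hi].
    - destruct (HBs idx Hi) as [[s Hin] _]. exists s; auto.
    - exists (0, 0); contradiction. }
  destruct Hslot as [g Hg].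
  assert (Hpair : forall idx idx', idx < length bs -> idx' < length bs -> idx <> idx' ->
    fst (g idx) = fst (g idx') /\ snd (g idx) <> snd (g idx')).
  { intros idx idx' Hi Hi' Hne. eapply slots_of_disjoint_parts; eauto. }
  set (i0 := fst (g 0)).
  assert (Hsame : forall idx, idx < length bs -> fst (g idx) = i0).
  { intros idx Hi. destruct (Nat.eq_dec idx 0) as [-> | Hne]; auto.
    symmetry; apply (Hpair 0 idx); auto; lia. }
  assert (Hg0 := Hg 0 ltac:(lia)).
  exists i0. split; [apply Hg0 | split].
  - eapply (varfree_sem_common _ _ _ H0n); [exact Hvf | exact HG |].
    apply (common_in_conjunct G (Bs 0) _ _ Hg0); auto. apply (HBs 0); lia.
  - intro c. apply count_occ_le_of_injection with (f := fun idx => snd (g idx)).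
    + intros x Hx. destruct (Hg x Hx) as (_ & H2 & H3 & _). rewrite Hsame in H2, H3; auto.
    + intros x y Hx Hy Exy. destruct (Nat.eq_dec x y) as [| Hne]; auto.
      exfalso. apply (Hpair x y Hx Hy Hne), Exy.
Qed.

End Witness.

Theorem mainTheorem9 (Prim : Type) (primSem : Prim -> (nat -> Z) -> Heap -> Prop)
    (eta : nat -> Z) (lhs rhs : list (assn Prim * list nat)) (n : nat) :
  canonical_form lhs rhs ->
  2 <= n ->
  (forall p, In p lhs -> length (snd p) <= n) ->
  valid_n primSem n eta (can_lhs lhs) (can_rhs rhs) ->
  parametricity primSem eta lhs rhs.
Proof.
  intros (_ & Hlv & Hrv & _) Hn Hvars Hval h hi Hhi.
  assert (Hbelow : forall i, i < length lhs -> hext (hi i) h) by apply Hhi.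
  destruct (proj2_sig h) as [N HN].
  assert (Hrhs := Hval _ (witness_rho_upclosed Prim lhs n h hi N) _
    (witness_lhs Prim primSem eta lhs n h hi N Hn HN Hbelow Hlv
       (fun i Hi => proj2 (Hhi i Hi)))).
  apply big_or_elim in Hrhs as (x & Hx & Hs).
  apply in_map_iff in Hx as ([psi bs] & <- & Hpr).
  destruct (In_nth _ _ (@ATrue Prim, @nil nat) Hpr) as (j & Hj & Ej).
  destruct (witness_disjunct Prim primSem eta lhs n h hi N Hn Hvars HN Hbelow psi bs
              (Hrv _ Hpr) Hs) as [[-> Hh] | (i & Hi & Hpsi & Hcnt)].
  - right. exists j. rewrite Ej. auto.
  - left. exists i, j. rewrite Ej. repeat split; auto. intros c _. apply Hcnt.
Qed.
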